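(* For every real sequence $u\in\mathbb R^{\mathbb N}$, $$\mathbf K^s_u=\inf_{(h,\beta)\in\Gamma(u)}\ \inf_{k\in\mathcal S(u,h)}\mathfrak F_u(k,h,\beta)=\inf_{(h,\beta)\in\Gamma(u)}\ \inf_{k\in\mathcal S(u,h)}\frac{\ln(h^{-1}_{[0,1]}(u_k))}{\ln\beta},$$ with $\inf\emptyset=+\infty$. Moreover, when $G^{>}_u\neq\emptyset$, both infima are attained (they are minima).
   Context: $\Delta^s_u=\{k\in\mathbb N:\max_{0\le j\le k}u_j>\sup_{j>k}u_j\}$, $\mathbf K^s_u=\inf\Delta^s_u$; $G^{>}_u=\{k:u_k>\limsup_n u_n\}$. $\Omega([0,1])$: functions $h:\mathbb R\to\mathbb R$ whose restriction to $[0,1]$ is strictly increasing and continuous; $h^{-1}_{[0,1]}$ the inverse of that restriction. $\Gamma(u)=\{(h,\beta)\in\Omega([0,1])\times(0,1):u_k\le h(\beta^k)\ \forall k\}$; $\mathcal S(u,h)=\{k:u_k>h(0)\}$. $\mathfrak F_u(k,h,\beta)=\ln(h^{-1}_{[0,1]}(u_k))/\ln\beta$ if $(h,\beta)\in\Gamma(u)$ and $k\in\mathcal S(u,h)$, and $+\infty$ otherwise. *)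

From HB Require Import structures.
From mathcomp Require Import all_boot all_order all_algebra.
From mathcomp Require Import all_classical all_reals all_analysis.
Set Implicit Arguments. Unset Strict Implicit. Unset Printing Implicit Defensive.
Import Order.TTheory GRing.Theory Num.Theory.
Import numFieldNormedType.Exports.
Local Open Scope classical_set_scope.
Local Open Scope ring_scope.

Section Defs.
Variable R : realType.

Definition DeltaS (u : nat -> R) : set nat :=
  [set k | ereal_sup [set (u j)%:E | j in [set j | (k < j)%N]] <
           (\big[Order.max/u 0%N]_(j < k.+1) u j)%:E]%E.

(* K^s_u = inf Delta^s_u in N u {+oo}, embedded in \bar R (inf of empty = +oo) *)
Definition KS (u : nat -> R) : \bar R :=
  ereal_inf [set (k%:R)%:E | k in DeltaS u].

Definition Ggt (u : nat -> R) : set nat :=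
  [set k | (limn_esup (fun n => (u n)%:E) < (u k)%:E)%E].

Definition Omega01 (h : R -> R) : Prop :=
  (forall x y : R, 0 <= x <= 1 -> 0 <= y <= 1 -> x < y -> h x < h y) /\
  {within `[0, 1], continuous h}.

(* inverse of the restriction of h to [0,1] (arbitrary value 0 outside h([0,1])) *)
Definition hinv01 (h : R -> R) (y : R) : R :=
  xget 0 [set x | 0 <= x <= 1 /\ h x = y].

Definition Gamma (u : nat -> R) : set ((R -> R) * R) :=
  [set hb | Omega01 hb.1 /\ 0 < hb.2 < 1 /\
            forall k : nat, u k <= hb.1 (hb.2 ^+ k)].

Definition Sset (u : nat -> R) (h : R -> R) : set nat :=
  [set k | h 0 < u k].

Definition FF (u : nat -> R) (k : nat) (h : R -> R) (beta : R) : \bar R :=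
  if `[< Gamma u (h, beta) /\ Sset u h k >]
  then (ln (hinv01 h (u k)) / ln beta)%:E
  else +oo%E.

End Defs.

(* If (h, β) ∈ Γ(u) and u_k > h(0), then x := h⁻¹(u_k) lies in (0, β^k].  For
   m := ⌊ln x / ln β⌋ ≥ k we have β^(m+1) < x, hence
   sup_{j>m} u_j ≤ h(β^(m+1)) < h(x) = u_k ≤ max_{j≤m} u_j: so m ∈ Δ^s_u and
   K^s_u ≤ m ≤ F_u(k, h, β).  Conversely, for m ∈ Δ^s_u, an affine h with
   h(0) between the two sides of the defining inequality of Δ^s_u and
   h(β^m) = max_{j≤m} u_j is admissible and gives F_u(k, h, β) = m at the
   index k realising the maximum.  Finally G^>_u ≠ ∅ forces Δ^s_u ≠ ∅,
   because the limsup is the infimum of the tail suprema; then the least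
   element of Δ^s_u realises both infima. *)
From HB Require Import structures.
From mathcomp Require Import all_boot all_order all_algebra.
From mathcomp Require Import all_classical all_reals all_analysis.
Import Order.TTheory GRing.Theory Num.Theory.
Import numFieldNormedType.Exports.
Set Implicit Arguments. Unset Strict Implicit.
Local Open Scope classical_set_scope.
Local Open Scope ring_scope.

Section PrefixMax.
Variables (R : realType) (u : nat -> R).

Local Notation prefix_max m := (\big[Order.max/u 0%N]_(j < m.+1) u j).

Lemma le_prefix_max k m : (k <= m)%N -> u k <= prefix_max m.
Proof.
move=> km; have km1 : (k < m.+1)%N by [].
exact: (le_bigmax (u 0%N) (fun j : 'I_m.+1 => u j) (Ordinal km1)).
Qed.

Lemma prefix_max_attained m : exists2 k, (k <= m)%N & u k = prefix_max m.
Proof.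
apply: (big_ind (fun x => exists2 k, (k <= m)%N & u k = x)).
- by exists 0%N.
- move=> x y [k1 k1m <-] [k2 k2m <-]; rewrite maxEle.
  by case: ifP => _; [exists k2 | exists k1].
- by move=> i _; exists (nat_of_ord i); rewrite -1?ltnS.
Qed.

End PrefixMax.

Section Omega01.
Variables (R : realType) (h : R -> R).
Hypothesis hO : Omega01 h.

Lemma Omega01_le x y : 0 <= x <= 1 -> 0 <= y <= 1 -> x <= y -> h x <= h y.
Proof.
move=> x01 y01; rewrite le_eqVlt => /orP[/eqP -> // | xy].
exact/ltW/(proj1 hO).
Qed.

Lemma hinv01K x : 0 <= x <= 1 -> hinv01 h (h x) = x.
Proof.
move=> x01; apply: xget_unique => // y [y01 hyx].
by case: (ltgtP y x) => // [yx | xy];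
  [have := proj1 hO _ _ y01 x01 yx | have := proj1 hO _ _ x01 y01 xy];
  rewrite hyx ltxx.
Qed.

End Omega01.

Lemma expr_itv01 (R : realType) (b : R) n : 0 < b < 1 -> 0 <= b ^+ n <= 1.
Proof. by case/andP=> b0 b1; rewrite exprn_ge0 ?exprn_ile1 ?ltW. Qed.

Section Characterisation.
Variables (R : realType) (u : nat -> R).

Lemma KS_le m : DeltaS u m -> (KS u <= (m%:R)%:E)%E.
Proof. by move=> Dm; apply: ereal_inf_lbound; exists m. Qed.

Lemma FF_Gamma h b k : Gamma u (h, b) -> Sset u h k ->
  FF u k h b = (ln (hinv01 h (u k)) / ln b)%:E.
Proof. by move=> G S; rewrite /FF asboolT. Qed.

Lemma Gamma_preimage h b k : Gamma u (h, b) -> Sset u h k ->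
  exists2 x, 0 < x <= b ^+ k & h x = u k.
Proof.
move=> [/= hO [/= b01 hb]] hk; have /andP[bk0 bk1] := expr_itv01 k b01.
have h0k : h 0 <= h (b ^+ k) by apply: Omega01_le; rewrite ?lexx ?ler01 ?bk0.
have [x + hx] : exists2 x, x \in `[0, b ^+ k] & h x = u k.
  apply: IVT => //; last by rewrite min_l // max_r // (ltW hk) hb.
  apply: continuous_subspaceW (proj2 hO) => y /=; rewrite !in_itv /=.
  by case/andP=> -> /le_trans ->.
rewrite in_itv /= => /andP[x0 xk]; exists x; rewrite // xk andbT lt_neqAle x0 andbT.
by apply: contraTneq hk => ->; rewrite /Sset /= hx ltxx.
Qed.

Lemma Gamma_DeltaS h b k m x : Gamma u (h, b) -> (k <= m)%N ->
  b ^+ m.+1 < x <= 1 -> h x = u k -> DeltaS u m.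
Proof.
move=> [/= hO [/= b01 hb]] km /andP[bx x1] hx; have /andP[b0 b1] := b01.
have /andP[bm0 bm1] := expr_itv01 m.+1 b01.
rewrite /DeltaS /=; apply: (@le_lt_trans _ _ (h (b ^+ m.+1))%:E).
  apply: ge_ereal_sup => _ [j /= mj <-]; rewrite lee_fin (le_trans (hb j)) //.
  by apply: Omega01_le; rewrite ?expr_itv01 // ler_wiXn2l ?ltW.
rewrite lte_fin (lt_le_trans _ (le_prefix_max u km)) // -hx.
by apply: (proj1 hO); rewrite ?bm0 ?bm1 ?x1 ?(le_trans bm0 (ltW bx)).
Qed.

Lemma KS_le_FF h b k : Gamma u (h, b) -> Sset u h k ->
  (KS u <= (ln (hinv01 h (u k)) / ln b)%:E)%E.
Proof.
move=> G hk; have [hO [/= b01 _]] := G; have /andP[b0 b1] := b01.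
have [x /andP[x0 xk] hx] := Gamma_preimage G hk.
have x1 : x <= 1 by case/andP: (expr_itv01 k b01) => _; exact: le_trans xk.
rewrite -hx hinv01K ?(ltW x0) ?x1 //.
have lnb : ln b < 0 by rewrite ln_lt0 ?b0.
set t := ln x / ln b.
have kt : k%:R <= t by rewrite ler_ndivlMr // mulr_natl -lnXn // ler_ln ?posrE
                               ?exprn_gt0.
set m := Num.truncn t.
have km : (k <= m)%N by rewrite truncn_ge_nat ?(le_trans _ kt).
have bmx : b ^+ m.+1 < x.
  rewrite -ltr_ln ?posrE ?exprn_gt0 // lnXn // -mulr_natl -ltr_ndivrMr //.
  by rewrite -truncn_le_nat.
apply: le_trans (KS_le (Gamma_DeltaS G km _ hx)) _; first by rewrite bmx x1.
by rewrite lee_fin -truncn_ge_nat ?(le_trans _ kt).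
Qed.

Lemma affine_Omega01 (r c : R) : 0 < c -> Omega01 (fun x => r + c * x).
Proof.
move=> c0; split; first by move=> x y _ _ xy; rewrite ltrD2l ltr_pM2l.
apply: continuous_subspaceT => x.
apply: (@continuousD _ _ _ (fun=> r) ( *%R c)); first exact: cst_continuous.
by apply: (@continuousM _ _ (fun=> c) id); first exact: cst_continuous.
Qed.

Lemma DeltaS_separation m : DeltaS u m ->
  exists2 r, r < \big[Order.max/u 0%N]_(j < m.+1) u j &
             forall j, (m < j)%N -> u j <= r.
Proof.
rewrite /DeltaS /=.
have ub j : (m < j)%N -> ((u j)%:E <= ereal_sup [set (u j)%:E | j in [set j | (m < j)%N]])%E.
  by move=> mj; apply: ereal_sup_ubound; exists j.
case: (ereal_sup _) ub => [r | | ] ub Dm.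
- by exists r => [| j /ub]; rewrite -?lte_fin -?lee_fin.
- by rewrite ltNge leey in Dm.
- by have := ub m.+1 (ltnSn m); rewrite leeNy_eq.
Qed.

(* The witness: β = 1/2 and the affine h with h(0) = r, h(β^m) = max_{j≤m} u_j. *)
Lemma DeltaS_FF m : DeltaS u m -> exists h b k,
  Gamma u (h, b) /\ Sset u h k /\ FF u k h b = (m%:R)%:E.
Proof.
move=> /DeltaS_separation [r rM ur].
have [k km uk] := prefix_max_attained u m.
set M := \big[Order.max/u 0%N]_(j < m.+1) u j in rM uk.
pose b : R := 2^-1.
have b0 : 0 < b by rewrite /b invr_gt0.
have b1 : b < 1 by rewrite /b invf_lt1 // ltr1n.
have b01 : 0 < b < 1 by rewrite b0 b1.
have bm0 : 0 < b ^+ m by rewrite exprn_gt0.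
pose c := (M - r) / b ^+ m; pose h x := r + c * x.
have c0 : 0 < c by rewrite divr_gt0 ?subr_gt0.
have hbm : h (b ^+ m) = M by rewrite /h /c divfK ?gt_eqF // addrC subrK.
have G : Gamma u (h, b).
  split; first exact: affine_Omega01.
  split=> // j /=; case: (leqP j m) => [jm | mj].
  - rewrite (le_trans (le_prefix_max u jm)) // -/M -hbm lerD2l ler_pM2l //.
    by rewrite ler_wiXn2l ?ltW.
  - by rewrite (le_trans (ur _ mj)) // lerDl mulr_ge0 ?exprn_ge0 ?ltW.
have Sk : Sset u h k by rewrite /Sset /h /= mulr0 addr0 uk.
exists h, b, k; do 2!split=> //.
rewrite FF_Gamma // uk -hbm hinv01K ?expr_itv01 //; last exact: affine_Omega01.
have lnb : ln b < 0 by exact: ln_lt0.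
by rewrite lnXn // mulrnAl divff ?lt_eqF.
Qed.

Lemma KS_eq_inf_FF : KS u =
  ereal_inf [set ereal_inf [set FF u k hb.1 hb.2 | k in Sset u hb.1] | hb in Gamma u].
Proof.
apply/le_anti/andP; split.
- apply: le_ereal_inf_tmp => _ [[h b] G <-] /=.
  apply: le_ereal_inf_tmp => _ [k hk <-] /=.
  by rewrite FF_Gamma //; exact: KS_le_FF.
- apply: le_ereal_inf_tmp => _ [m Dm <-].
  have [h [b [k [G [hk <-]]]]] := DeltaS_FF Dm.
  apply: le_trans (ereal_inf_lbound _) _; first by exists (h, b).
  by apply: ereal_inf_lbound; exists k.
Qed.

Lemma Ggt_DeltaS : Ggt u !=set0 -> DeltaS u !=set0.
Proof.
move=> [k]; rewrite /Ggt /= limn_esup_lim.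
have -> : limn (esups (fun n => (u n)%:E)) = ereal_inf (range (esups (fun n => (u n)%:E))).
  by apply: cvg_lim => //; exact: cvg_esups_inf.
move=> /ereal_inf_lt [_ [n _ <-] nk].
exists (maxn n k); rewrite /DeltaS /=.
apply: le_lt_trans (lt_le_trans nk _); last by rewrite lee_fin (le_prefix_max u (leq_maxr n k)).
apply: ereal_sup_le => _ [j /= mj <-]; exists j => //=.
by move: mj; rewrite gtn_max => /andP[/ltnW].
Qed.

Lemma KS_attained : DeltaS u !=set0 -> exists2 m, DeltaS u m & KS u = (m%:R)%:E.
Proof.
move=> [m0 Dm0].
have exD : exists n, `[< DeltaS u n >] by exists m0; apply/asboolP.
case: (ex_minnP exD) => m /asboolP Dm minm; exists m => //.
apply/le_anti; rewrite KS_le //=.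
apply: le_ereal_inf_tmp => _ [n Dn <-].
by rewrite lee_fin ler_nat minm //; exact/asboolP.
Qed.

End Characterisation.

Theorem mainTheorem8 (R : realType) (u : nat -> R) :
  KS u = ereal_inf [set ereal_inf [set FF u k hb.1 hb.2 | k in Sset u hb.1]
                   | hb in Gamma u] /\
  ereal_inf [set ereal_inf [set FF u k hb.1 hb.2 | k in Sset u hb.1]
            | hb in Gamma u] =
  ereal_inf [set ereal_inf [set (ln (hinv01 hb.1 (u k)) / ln hb.2)%:E
                           | k in Sset u hb.1]
            | hb in Gamma u] /\
  (Ggt u !=set0 ->
     (exists k, DeltaS u k /\ KS u = (k%:R)%:E) /\
     (exists h (beta : R) (k : nat),
        Gamma u (h, beta) /\ Sset u h k /\
        FF u k h beta = KS u)).
Proof.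
split; first exact: KS_eq_inf_FF.
split.
  congr ereal_inf; apply: eq_imagel => -[h b] G /=.
  by congr ereal_inf; apply: eq_imagel => k hk; rewrite FF_Gamma.
move=> /Ggt_DeltaS /KS_attained [m Dm KSm]; split; first by exists m.
have [h [b [k [G [hk hF]]]]] := DeltaS_FF Dm.
by exists h, b, k; rewrite KSm.
Qed.
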